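(* Let $n$ be a positive integer and let $\lambda=(\lambda_1,\dots,\lambda_\ell)$ and $\mu=(\mu_1,\dots,\mu_{\ell'})$ be integer partitions of $n$ with $\mathrm{pre}_2(\lambda) = \mathrm{pre}_2(\mu)$. Then for every nonnegative integer $m$, $\sum_{i=1}^{\ell} \lambda_i^{2^m} = \sum_{i=1}^{\ell'} \mu_i^{2^m}$.
   Context: An integer partition $\lambda = (\lambda_1, \dots, \lambda_\ell)$ of a positive integer $n$ is a weakly decreasing finite sequence of positive integers whose sum is $n$; the $\lambda_i$ are its parts and $\ell(\lambda)=\ell$ is its length. For a partition $\lambda = (\lambda_1,\dots,\lambda_\ell)$, $\mathrm{pre}_2(\lambda)$ denotes the partition whose multiset of parts is the multiset $\{\!\{\lambda_i\lambda_j : 1 \le i < j \le \ell\}\!\}$ (with multiplicities, arranged in weakly decreasing order); if $\ell < 2$ it is the empty partition. *)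

From mathcomp Require Import all_boot.

Definition is_partition (n : nat) (la : seq nat) : bool :=
  [&& sorted geq la, all (fun x => 0 < x) la & sumn la == n].

(* pre_2(la): multiset {{ la_i * la_j : i < j }}, sorted weakly decreasingly. *)
Definition pre2 (la : seq nat) : seq nat :=
  sort geq (flatten [seq [seq nth 0 la i * nth 0 la j | j <- iota i.+1 (size la - i.+1)]
                   | i <- iota 0 (size la)]).

Example pre2_ex : pre2 [:: 3; 2; 1] = [:: 6; 3; 2].
Proof. by []. Qed.

From mathcomp Require Import all_boot zify.

(* Writing p_k for the k-th power sum and P_k for the k-th power sum of the
   pairwise products lambda_i lambda_j (i < j), squaring gives
   p_k^2 = p_(2k) + 2 P_k.  The multiset pre_2 determines every P_k, and
   p_1 = n, so induction on m determines p_(2^m). *)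

Fixpoint pair_products (s : seq nat) : seq nat :=
  if s is x :: t then [seq x * y | y <- t] ++ pair_products t else [::].

Lemma pre2_flattenE (s : seq nat) :
  flatten [seq [seq nth 0 s i * nth 0 s j | j <- iota i.+1 (size s - i.+1)]
          | i <- iota 0 (size s)] = pair_products s.
Proof.
have iotaS a k : iota a.+1 k = map S (iota a k) by rewrite -add1n iotaDl.
elim: s => [//|x t IHt] /=.
rewrite -IHt subn1 /= iotaS -!map_comp; congr (_ ++ _).
  have t_nth : t = map (nth 0 t) (iota 0 (size t)).
    by rewrite map_nth_iota0 // take_size.
  by rewrite [in RHS]t_nth -map_comp.
by congr flatten; apply: eq_map => i /=; rewrite subSS iotaS -map_comp.
Qed.

Lemma perm_pre2 (s : seq nat) : perm_eq (pre2 s) (pair_products s).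
Proof. by rewrite /pre2 perm_sort pre2_flattenE. Qed.

Lemma sqr_power_sum (s : seq nat) (k : nat) :
  (\sum_(x <- s) x ^ k) ^ 2
    = \sum_(x <- s) x ^ (k * 2) + 2 * \sum_(y <- pair_products s) y ^ k.
Proof.
elim: s => [|x t IHt]; first by rewrite !big_nil.
rewrite /= !big_cons big_cat big_map /= sqrnD IHt expnM.
have -> : \sum_(y <- t) (x * y) ^ k = x ^ k * \sum_(y <- t) y ^ k.
  by rewrite big_distrr; apply: eq_bigr => y _; rewrite expnMn.
set p := \sum_(_ <- t) _ ^ k; set q := \sum_(_ <- t) _.
set r := \sum_(_ <- pair_products t) _; lia.
Qed.

Lemma power_sum_exp2_eq (la mu : seq nat) :
  sumn la = sumn mu -> perm_eq (pair_products la) (pair_products mu) ->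
  forall m, \sum_(x <- la) x ^ (2 ^ m) = \sum_(x <- mu) x ^ (2 ^ m).
Proof.
move=> eq_sum eq_pairs; elim=> [|m IHm].
  by rewrite expn0 !(eq_bigr _ (fun x _ => expn1 x)) -!sumnE.
have eq_pair_sums : \sum_(y <- pair_products la) y ^ 2 ^ m
                   = \sum_(y <- pair_products mu) y ^ 2 ^ m by apply: perm_big.
have := sqr_power_sum la (2 ^ m); have := sqr_power_sum mu (2 ^ m).
rewrite eq_pair_sums IHm -expnSr => ->; lia.
Qed.

Theorem mainTheorem3 (n : nat) (la mu : seq nat) :
  0 < n -> is_partition n la -> is_partition n mu ->
  pre2 la = pre2 mu ->
  forall m : nat, \sum_(x <- la) x ^ (2 ^ m) = \sum_(x <- mu) x ^ (2 ^ m).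
Proof.
move=> _ /and3P[_ _ /eqP sum_la] /and3P[_ _ /eqP sum_mu] eq_pre2.
apply: power_sum_exp2_eq; first by rewrite sum_la sum_mu.
by rewrite -(permPl (perm_pre2 la)) eq_pre2 perm_pre2.
Qed.
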